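(* Let $A,B,B'$ be clusterings of $\{1,\dots,n\}$. Then $B'$ is an $A$-consistent improvement of $B$ if and only if $B'\neq B$ and $B'$ can be obtained from $B$ by a finite sequence of perfect splits and perfect merges (each taken with respect to $A$).
   Context: A clustering of $\{1,\dots,n\}$ is a partition into nonempty disjoint clusters. A pair of distinct elements is an intra-cluster pair of a clustering if both lie in the same cluster, and an inter-cluster pair otherwise. A pair agrees in clusterings $A$ and $B$ if it is intra-cluster in both or inter-cluster in both. $B'$ is an $A$-consistent improvement of $B$ if $B\neq B'$ and every pair of elements that agrees in $A$ and $B$ also agrees in $A$ and $B'$. $B'$ is a perfect split of $B$ (w.r.t. $A$) if $B'$ is obtained from $B$ by splitting one cluster $B_1$ into two nonempty clusters $B_1',B_2'$ such that for every cluster $A_i$ of $A$, $A_i\cap B_1$ is contained in $B_1'$ or in $B_2'$. $B'$ is a perfect merge of $B$ (w.r.t. $A$) if there is a cluster $A_i$ of $A$ and two distinct clusters $B_1,B_2\subseteq A_i$ of $B$ such that $B'$ is obtained from $B$ by merging $B_1$ and $B_2$ into one cluster. *)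

(* Elements {1..n} are represented by 'I_n. *)
From HB Require Import structures.
From Stdlib Require Import Relations.
From mathcomp Require Import all_boot.
Set Implicit Arguments. Unset Strict Implicit. Unset Printing Implicit Defensive.

Definition clustering (n : nat) (P : {set {set 'I_n}}) : bool :=
  partition P [set: 'I_n].

Definition intra (n : nat) (P : {set {set 'I_n}}) (x y : 'I_n) : bool :=
  [exists C in P, (x \in C) && (y \in C)].

Definition agrees (n : nat) (A B : {set {set 'I_n}}) (x y : 'I_n) : bool :=
  intra A x y == intra B x y.

Definition consistent_improvement (n : nat) (A B B' : {set {set 'I_n}}) : Prop :=
  B != B' /\
  forall x y : 'I_n, x != y -> agrees A B x y -> agrees A B' x y.

Definition perfect_split (n : nat) (A B B' : {set {set 'I_n}}) : Prop :=
  exists B1 B1' B2' : {set 'I_n},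
    [/\ B1 \in B, (B1' != set0) && (B2' != set0),
        [disjoint B1' & B2'] && (B1' :|: B2' == B1),
        B' = B1' |: (B2' |: (B :\ B1)) &
        forall Ai, Ai \in A -> (Ai :&: B1 \subset B1') || (Ai :&: B1 \subset B2')].

Definition perfect_merge (n : nat) (A B B' : {set {set 'I_n}}) : Prop :=
  exists Ai B1 B2 : {set 'I_n},
    [/\ Ai \in A, (B1 \in B) && (B2 \in B), B1 != B2,
        (B1 \subset Ai) && (B2 \subset Ai) &
        B' = (B1 :|: B2) |: ((B :\ B1) :\ B2)].

Definition perfect_step (n : nat) (A : {set {set 'I_n}}) : relation {set {set 'I_n}} :=
  fun B B' => perfect_split A B B' \/ perfect_merge A B B'.

From Stdlib Require Import Relations.
From mathcomp Require Import all_boot.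
Set Implicit Arguments. Unset Strict Implicit. Unset Printing Implicit Defensive.

(* Consistency with A only constrains pairs on which A and B agree, so B may be
   moved towards B' one perfect step at a time, each step fixing at least one
   pair on which B and B' disagree while keeping all pairs on which they agree.
   If some pair is together in B but apart in B', split the B-cluster X of x
   along the B'-cluster Y of x: the split is perfect because two elements of
   one A-cluster in X are together in B, hence, by consistency, together in
   B', so both lie in Y or both outside it.  Otherwise B refines B' and some
   pair x, y is apart in B but together in B'; by consistency every such pair
   is together in A, so the B-clusters of x and y lie in the A-cluster of x and
   merging them is perfect.  Conversely, a perfect step never breaks a pair on
   which A and B agree. *)


Section PartitionSurgery.
Variable T : finType.
Implicit Types (P : {set {set T}}) (D X Z : {set T}).

Lemma partition_split P D X X1 X2 :
  partition P D -> X \in P -> X1 != set0 -> X2 != set0 ->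
  [disjoint X1 & X2] -> X1 :|: X2 = X ->
  partition (X1 |: (X2 |: (P :\ X))) D.
Proof.
move=> partP PX X1n0 X2n0 dis12 defX.
have sXD := partitionS partP PX.
have disX (Y : {set T}) : Y \subset X -> [disjoint Y & D :\: X].
  by move=> sYX; apply: disjointWl sYX _; rewrite disjoint_sym disjoints_subset subDset setUCr.
have defD : X1 :|: (X2 :|: D :\: X) = D.
  by rewrite setUA defX setDE setUIr setUCr setIT (setUidPr sXD).
rewrite -[in partition _ D]defD.
apply: partitionU1 (partitionU1 (partitionD1 partP PX) X2n0 (disX _ _)) X1n0 _.
  by rewrite -defX subsetUr.
by rewrite -setI_eq0 setIUr setU_eq0 !setI_eq0 dis12 disX // -defX subsetUl.
Qed.

Lemma partition_merge P D X Z :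
  partition P D -> X \in P -> Z \in P -> X != Z ->
  partition ((X :|: Z) |: ((P :\ X) :\ Z)) D.
Proof.
move=> partP PX PZ neqXZ.
have PZX : Z \in P :\ X by rewrite !inE eq_sym neqXZ.
have sXZD : X :|: Z \subset D by rewrite subUset !(partitionS partP).
have defD : (X :|: Z) :|: ((D :\: X) :\: Z) = D.
  by rewrite setDDl setDE setUIr setUCr setIT (setUidPr sXZD).
rewrite -[in partition _ D]defD.
apply: partitionU1 (partitionD1 (partitionD1 partP PX) PZX) _ _.
  by rewrite setU_eq0 negb_and (partition_neq0 partP PX).
by rewrite setDDl disjoint_sym disjoints_subset subDset setUCr subsetT.
Qed.
End PartitionSurgery.

Section Clusterings.
Variable n : nat.
Implicit Types (A B C P Q : {set {set 'I_n}}) (D X Y Z : {set 'I_n}) (x y u v : 'I_n).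

Lemma intraP P x y :
  reflect (exists D, [/\ D \in P, x \in D & y \in D]) (intra P x y).
Proof.
apply: (iffP existsP) => [[D /and3P [] ] | [D [] PD xD yD]]; first by exists D.
by exists D; rewrite PD xD yD.
Qed.

Lemma intra_sym P x y : intra P x y = intra P y x.
Proof. by apply/intraP/intraP => -[D [PD xD yD]]; exists D. Qed.

Section OneClustering.
Variable P : {set {set 'I_n}}.
Hypothesis clP : clustering P.
Let tiP : trivIset P := partition_trivIset clP.

Lemma mem_cover_clustering x : x \in cover P.
Proof. by rewrite (cover_partition clP) inE. Qed.

Lemma intra_pblock x y : intra P x y = (y \in pblock P x).
Proof.
apply/intraP/idP => [[D [PD xD yD]] | yPx]; first by rewrite (def_pblock tiP PD xD).
by exists (pblock P x); rewrite pblock_mem ?mem_pblock ?mem_cover_clustering.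
Qed.

Lemma intra_refl x : intra P x x.
Proof. by rewrite intra_pblock mem_pblock mem_cover_clustering. Qed.

Lemma intra_trans y x z : intra P x y -> intra P y z -> intra P x z.
Proof. by rewrite !intra_pblock => yPx; rewrite (same_pblock tiP yPx). Qed.

Lemma mem_clusterE D x : D \in P -> (x \in D) = (pblock P x == D).
Proof.
move=> PD; apply/idP/eqP => [|<-]; first exact: def_pblock.
by rewrite mem_pblock mem_cover_clustering.
Qed.

Lemma intra_mem D u v : D \in P -> intra P u v -> (u \in D) = (v \in D).
Proof.
by move=> PD; rewrite intra_pblock !(mem_clusterE _ PD) => /(same_pblock tiP) ->.
Qed.

End OneClustering.

Lemma clustering_eq P Q :
  clustering P -> clustering Q -> intra P =2 intra Q -> P = Q.
Proof.
move=> clP clQ eqPQ; rewrite -(equivalence_partition_pblock clP).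
rewrite -(equivalence_partition_pblock clQ); apply: eq_imset => x.
by apply/setP => y; rewrite !inE -!intra_pblock ?eqPQ.
Qed.

Lemma intra_split B X X1 X2 u v :
  clustering B -> X \in B -> [disjoint X1 & X2] -> X1 :|: X2 = X ->
  intra (X1 |: (X2 |: (B :\ X))) u v = intra B u v && ((u \in X1) == (v \in X1)).
Proof.
move=> clB BX dis12 defX.
have sX1X : X1 \subset X by rewrite -defX subsetUl.
have sX2X : X2 \subset X by rewrite -defX subsetUr.
apply/intraP/andP => [[D [] /setU1P [->|/setU1P [->|/setD1P [neqDX BD]]] uD vD] |].
- by split; [apply/intraP; exists X; rewrite !(subsetP sX1X) | rewrite uD vD].
- split; first by apply/intraP; exists X; rewrite !(subsetP sX2X).
  by rewrite !(disjointFl dis12).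
- split; first by apply/intraP; exists D.
  have notX w : w \in D -> w \notin X1.
    move=> wD; apply: contra neqDX => /(subsetP sX1X).
    by rewrite (mem_clusterE clB _ BX) (def_pblock (partition_trivIset clB) BD wD).
  by rewrite !(negbTE (notX _ _)).
move=> [/intraP [D [BD uD vD]] /eqP sameX1].
have [eqDX | neqDX] := eqVneq D X; last by exists D; rewrite !inE neqDX BD !orbT.
have inX2 w : w \in X -> w \notin X1 -> w \in X2.
  by rewrite -defX inE => /orP [->|].
case: (boolP (u \in X1)) => uX1.
  by exists X1; rewrite setU11 -sameX1.
exists X2; rewrite !inE eqxx orbT !inX2 -?eqDX //.
by rewrite -sameX1.
Qed.

Lemma intra_merge B X Z u v :
  intra ((X :|: Z) |: ((B :\ X) :\ Z)) u v =
  intra B u v || (u \in X :|: Z) && (v \in X :|: Z).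
Proof.
apply/intraP/orP => [[D [] /setU1P [->|] ] | [/intraP [D [BD uD vD]] | /andP [uXZ vXZ]]].
- by move=> uXZ vXZ; right; rewrite uXZ vXZ.
- by rewrite !inE => /and3P [_ _ BD] uD vD; left; apply/intraP; exists D.
- have [eqDX | neqDX] := eqVneq D X.
    by exists (X :|: Z); rewrite setU11 !inE -eqDX uD vD.
  have [eqDZ | neqDZ] := eqVneq D Z.
    by exists (X :|: Z); rewrite setU11 !inE -eqDZ uD vD !orbT.
  by exists D; rewrite !inE neqDX neqDZ BD !orbT.
- by exists (X :|: Z); rewrite setU11.
Qed.

Lemma perfect_split_clustering A B C : clustering B -> perfect_split A B C -> clustering C.
Proof.
move=> clB [X [X1 [X2 [BX /andP [nz1 nz2] /andP [dis12 /eqP defX] -> _]]]].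
exact: partition_split.
Qed.

Lemma perfect_merge_clustering A B C : clustering B -> perfect_merge A B C -> clustering C.
Proof. by move=> clB [_ [X [Z [_ /andP [BX BZ] neqXZ _ ->]]]]; apply: partition_merge. Qed.

Lemma perfect_step_clustering A B C : clustering B -> perfect_step A B C -> clustering C.
Proof. by move=> clB [/(perfect_split_clustering clB) | /(perfect_merge_clustering clB)]. Qed.

Lemma perfect_split_agrees A B C x y :
  clustering B -> perfect_split A B C -> agrees A B x y -> agrees A C x y.
Proof.
move=> clB [X [X1 [X2 [BX _ /andP [dis12 /eqP defX] -> perfect]]]] /eqP eqAB.
rewrite /agrees intra_split // -eqAB; case: (boolP (intra A x y)) => //= xyA.
have xyB : intra B x y by rewrite -eqAB.
have [Ai [AAi xAi yAi]] := intraP _ _ _ xyA.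
case: (boolP (x \in X)) => xX; last first.
  have notX1 w : w \notin X -> w \notin X1.
    by apply: contra => /(subsetP _); apply; rewrite -defX subsetUl.
  by rewrite !(negbTE (notX1 _ _)) // -(intra_mem clB BX xyB).
have yX : y \in X by rewrite -(intra_mem clB BX xyB).
have [xAX yAX] : x \in Ai :&: X /\ y \in Ai :&: X by rewrite !inE xAi xX yAi yX.
case/orP: (perfect Ai AAi) => /subsetP sub; first by rewrite !sub.
by rewrite !(disjointFl dis12) ?sub.
Qed.

Lemma perfect_merge_agrees A B C x y :
  perfect_merge A B C -> agrees A B x y -> agrees A C x y.
Proof.
move=> [Ai [X [Z [AAi _ _ /andP [sXAi sZAi] ->]]]] /eqP eqAB.
rewrite /agrees intra_merge -eqAB; case: (boolP (intra A x y)) => //= /negP nxyA.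
apply/negP => /andP [xXZ yXZ]; apply: nxyA; apply/intraP; exists Ai.
have /subsetP sXZAi : X :|: Z \subset Ai by rewrite subUset sXAi sZAi.
by rewrite AAi !sXZAi.
Qed.

Lemma perfect_step_agrees A B C x y :
  clustering B -> perfect_step A B C -> agrees A B x y -> agrees A C x y.
Proof. by move=> clB [st | st]; [apply: perfect_split_agrees | apply: perfect_merge_agrees]. Qed.

Lemma perfect_steps_agrees A B C x y :
  clustering B -> clos_refl_trans _ (perfect_step A) B C ->
  agrees A B x y -> agrees A C x y.
Proof.
move=> clB BC; elim: {BC}(clos_rt_rt1n _ _ _ _ BC) clB => // B0 C0 D0 stBC _ IH clB0 agB0.
exact: IH (perfect_step_clustering clB0 stBC) (perfect_step_agrees clB0 stBC agB0).
Qed.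

Definition consistent A B B' :=
  forall x y, x != y -> agrees A B x y -> agrees A B' x y.

Definition between B B' C :=
  forall u v, intra B u v = intra B' u v -> intra C u v = intra B u v.

Definition disagreement B B' :=
  #|[set p : 'I_n * 'I_n | intra B p.1 p.2 != intra B' p.1 p.2]|.

Lemma disagreement_between B B' C x y :
  between B B' C -> intra C x y != intra B x y ->
  disagreement C B' < disagreement B B'.
Proof.
move=> betC neqCB; apply: proper_card; apply/properP; split.
  apply/subsetP => -[u v]; rewrite !inE /=; apply: contraNN => /eqP eqBB'.
  by rewrite betC // eqBB'.
have neqBB' : intra B x y != intra B' x y by apply: contraNneq neqCB => /betC ->.
exists (x, y); rewrite !inE //=.
by move: neqCB neqBB'; case: (intra B x y); case: (intra C x y); case: (intra B' x y).
Qed.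

Lemma consistent_between A B B' C :
  between B B' C -> consistent A B B' -> consistent A C B'.
Proof.
move=> betC consB x y neqxy; have [eqBB' | neqBB'] := eqVneq (intra B x y) (intra B' x y).
  by rewrite /agrees (betC _ _ eqBB'); apply: consB.
have /negbTE neqAB : ~~ agrees A B x y.
  by apply: contra neqBB' => /[dup] /(consB _ _ neqxy) /eqP <- /eqP ->.
move: neqAB neqBB'; rewrite /agrees.
by case: (intra A x y); case: (intra B x y); case: (intra B' x y).
Qed.

Lemma consistent_intra A B B' u v :
  clustering B' -> consistent A B B' -> intra A u v -> intra B u v -> intra B' u v.
Proof.
move=> clB' consB uvA uvB; have [-> | neq] := eqVneq u v; first exact: intra_refl.
by have := consB _ _ neq; rewrite /agrees uvA uvB => /(_ isT) /eqP <-.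
Qed.

Lemma consistent_joined_intra A B B' u v :
  clustering B -> consistent A B B' -> intra B' u v -> ~~ intra B u v -> intra A u v.
Proof.
move=> clB consB uvB' nuvB.
have neq : u != v by apply: contraNneq nuvB => ->; apply: intra_refl.
apply: contraLR uvB' => nuvA.
by have := consB _ _ neq; rewrite /agrees (negbTE nuvA) (negbTE nuvB) => /(_ isT) /eqP <-.
Qed.

Lemma perfect_split_towards A B B' x y :
  clustering B -> clustering B' -> consistent A B B' ->
  intra B x y -> ~~ intra B' x y ->
  exists2 C, perfect_split A B C & between B B' C /\ intra C x y != intra B x y.
Proof.
move=> clB clB' consB xyB nxyB'.
set X := pblock B x; set Y := pblock B' x.
have BX : X \in B by rewrite pblock_mem ?mem_cover_clustering.
have B'Y : Y \in B' by rewrite pblock_mem ?mem_cover_clustering.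
have dis : [disjoint X :&: Y & X :\: Y].
  by rewrite -setI_eq0 setIDA setD_eq0 subIset ?subsetIr.
have defX : X :&: Y :|: X :\: Y = X := setID X Y.
have xXY : x \in X :&: Y by rewrite inE !mem_pblock !mem_cover_clustering.
have yXY : y \in X :\: Y by rewrite inE -!intra_pblock // xyB nxyB'.
exists (X :&: Y |: (X :\: Y |: B :\ X)).
  exists X, (X :&: Y), (X :\: Y); split => //.
  - by apply/andP; split; apply/set0Pn; [exists x | exists y].
  - by rewrite dis defX eqxx.
  move=> Ai AAi; case: (boolP (Ai :&: X \subset X :\: Y)) => [subX2 | /subsetPn [u]].
    by apply/orP; right.
  rewrite !inE => /andP [uAi uX]; rewrite uX andbT negbK => uY.
  apply/orP; left; apply/subsetP => v; rewrite !inE => /andP [vAi vX]; rewrite vX.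
  have uvB' : intra B' u v.
    by apply: consistent_intra consB _ _ => //; apply/intraP; [exists Ai | exists X].
  by rewrite -(intra_mem clB' B'Y uvB').
split; last by rewrite intra_split // xyB xXY (disjointFl dis yXY).
move=> u v eqBB'; rewrite intra_split //; case: (boolP (intra B u v)) => //= uvB.
have uvB' : intra B' u v by rewrite -eqBB'.
by rewrite !inE (intra_mem clB BX uvB) (intra_mem clB' B'Y uvB') eqxx.
Qed.

Lemma perfect_merge_towards A B B' x y :
  clustering A -> clustering B -> clustering B' -> consistent A B B' ->
  (forall u v, intra B u v -> intra B' u v) ->
  intra B' x y -> ~~ intra B x y ->
  exists2 C, perfect_merge A B C & between B B' C /\ intra C x y != intra B x y.
Proof.
move=> clA clB clB' consB subBB' xyB' nxyB.
set X := pblock B x; set Z := pblock B y.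
have inX u : (u \in X) = intra B x u by rewrite intra_pblock.
have inZ u : (u \in Z) = intra B y u by rewrite intra_pblock.
have xyA : intra A x y := consistent_joined_intra clB consB xyB' nxyB.
have XZB' u : u \in X :|: Z -> intra B' x u.
  rewrite inE inX inZ => /orP [/subBB' // | /subBB' yuB'].
  exact: (intra_trans clB' xyB' yuB').
have XZA u : u \in X :|: Z -> intra A x u.
  move=> uXZ; move: (uXZ); rewrite inE inX inZ => /orP [xuB | yuB].
    have nuyB : ~~ intra B u y.
      by apply: contra nxyB; exact: (intra_trans clB xuB).
    have uyB' : intra B' u y.
      by apply: (intra_trans clB' _ xyB'); rewrite intra_sym XZB'.
    rewrite intra_sym; apply: (intra_trans clA (consistent_joined_intra clB consB uyB' nuyB)).
    by rewrite intra_sym.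
  have nxuB : ~~ intra B x u.
    by apply: contra nxyB => xuB; apply: (intra_trans clB xuB); rewrite intra_sym.
  exact: consistent_joined_intra clB consB (XZB' u uXZ) nxuB.
exists ((X :|: Z) |: ((B :\ X) :\ Z)).
  exists (pblock A x), X, Z; split => //.
  - by rewrite pblock_mem ?mem_cover_clustering.
  - by rewrite !pblock_mem ?mem_cover_clustering.
  - by apply: contraNneq nxyB => eqXZ; rewrite -inX eqXZ inZ (intra_refl clB).
  - by apply/andP; split; apply/subsetP => u uXZ; rewrite -intra_pblock // XZA // inE uXZ ?orbT.
split; last by rewrite intra_merge (negbTE nxyB) !inE !inX !inZ !(intra_refl clB) ?orbT.
move=> u v eqBB'; rewrite intra_merge; case: (boolP (intra B u v)) => //= nuvB.
apply/negbTE/negP => /andP [/XZB' xuB' /XZB' xvB'].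
by move: nuvB; rewrite eqBB' (intra_trans (y := x) clB') // intra_sym.
Qed.

Lemma perfect_step_towards A B B' :
  clustering A -> clustering B -> clustering B' -> consistent A B B' -> B != B' ->
  exists2 C, perfect_step A B C &
    consistent A C B' /\ disagreement C B' < disagreement B B'.
Proof.
move=> clA clB clB' consB neqBB'.
suff [C stC [betC [x [y neqCB]]]] : exists2 C, perfect_step A B C &
    between B B' C /\ exists x y, intra C x y != intra B x y.
  exists C => //; split; [exact: consistent_between consB | exact: disagreement_between neqCB].
have /forallPn [x /forallPn [y neqxy]] : ~~ [forall x, forall y, intra B x y == intra B' x y].
  apply: contra neqBB' => /forallP eqBB'; apply/eqP/clustering_eq => // x y.
  by move: (eqBB' x) => /forallP /(_ y) /eqP.
case: (boolP [exists u, exists v, intra B u v && ~~ intra B' u v]).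
  move=> /existsP [u /existsP [v /andP [uvB nuvB']]].
  have [C stC [betC neqCB]] := perfect_split_towards clB clB' consB uvB nuvB'.
  by exists C; [left | split; last exists u, v].
move=> /existsPn noSplit.
have subBB' u v : intra B u v -> intra B' u v.
  by have /existsPn/(_ v) := noSplit u; rewrite negb_and negbK => /orP [/negbTE -> |].
have /andP [xyB' nxyB] : intra B' x y && ~~ intra B x y.
  by move: neqxy (subBB' x y); case: (intra B x y); case: (intra B' x y) => // _ /(_ isT).
have [C stC [betC neqCB]] := perfect_merge_towards clA clB clB' consB subBB' xyB' nxyB.
by exists C; [right | split; last exists x, y].
Qed.

Lemma consistent_perfect_steps A B B' :
  clustering A -> clustering B -> clustering B' -> consistent A B B' ->
  clos_refl_trans _ (perfect_step A) B B'.
Proof.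
move=> clA clB clB'; move: {2}(disagreement B B') (leqnn (disagreement B B')) => k.
elim: k B clB => [|k IH] B clB leBk consB; have [-> | neqBB'] := eqVneq B B'.
- exact: rt_refl.
- have [C _ [_ ltCB]] := perfect_step_towards clA clB clB' consB neqBB'.
  by move: (leq_trans ltCB leBk).
- exact: rt_refl.
have [C stC [consC ltCB]] := perfect_step_towards clA clB clB' consB neqBB'.
apply: rt_trans (rt_step _ _ _ _ stC) (IH _ (perfect_step_clustering clB stC) _ consC).
by rewrite -ltnS (leq_trans ltCB).
Qed.
End Clusterings.

Theorem theorem2 (n : nat) (A B B' : {set {set 'I_n}}) :
  clustering A -> clustering B -> clustering B' ->
  (consistent_improvement A B B' <->
   B' != B /\ clos_refl_trans {set {set 'I_n}} (perfect_step A) B B').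
Proof.
move=> clA clB clB'; split=> [[neqBB' consB] | [neqB'B stepsBB']].
  by rewrite eq_sym; split; last exact: consistent_perfect_steps.
by split=> [|x y _]; [rewrite eq_sym | exact: perfect_steps_agrees stepsBB'].
Qed.
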